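(* In the setting below, for every $H\ge1$, $$\|\widehat{Q}_0-Q_0\|_\infty\le\sum_{h=0}^{H-1}\gamma^{h+1}L\,\big\|(\widehat{P}_\mathcal{K}-P_\mathcal{K})\widehat{V}_{h+1}\big\|_\infty.$$
   Context: $M=(\mathcal{S},\mathcal{A},P,r,\gamma)$ is a discounted MDP (finite $\mathcal{S},\mathcal{A}$, $r\in[0,1]$, $\gamma\in(0,1)$) with $P(s'|s,a)=\sum_{k}\phi_k(s,a)\psi_k(s')$. Regularity assumption: there are a set $\mathcal{K}=\{(s_k,a_k)\}$ of state-action pairs and $L\ge1$ such that for every $(s,a)$ there are real coefficients $\lambda_k^{s,a}$ with $\phi(s,a)=\sum_{k\in\mathcal{K}}\lambda_k^{s,a}\phi(s_k,a_k)$ and $\sum_{k\in\mathcal{K}}|\lambda_k^{s,a}|\le L$. $P_\mathcal{K}$ is the $|\mathcal{K}|\times|\mathcal{S}|$ matrix of rows $P(\cdot|s_k,a_k)$; $\widehat{P}_\mathcal{K}$ has rows the empirical distributions of $N$ samples from $P(\cdot|s_k,a_k)$; $\widehat{P}(s'|s,a)=\sum_k\lambda_k^{s,a}\widehat{P}_\mathcal{K}(s'|s_k,a_k)$ (possibly with negative entries). Value iteration for $H$ steps: $\widehat{V}_H=V_H=0$; for $h=H-1,\dots,0$, $\widehat{Q}_h=r+\gamma\widehat{P}\widehat{V}_{h+1}$, $\widehat{V}_h(s)=\max_a\widehat{Q}_h(s,a)$, and $Q_h=r+\gamma PV_{h+1}$, $V_h(s)=\max_aQ_h(s,a)$. For $V:\mathcal{S}\to\mathbb{R}$,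 $(\widehat{P}_\mathcal{K}-P_\mathcal{K})V$ is the vector $k\mapsto\sum_{s'}(\widehat{P}_\mathcal{K}(s'|s_k,a_k)-P(s'|s_k,a_k))V(s')$. *)

From HB Require Import structures.
From mathcomp Require Import all_boot all_order all_algebra.
From mathcomp Require Import reals.
Set Implicit Arguments. Unset Strict Implicit. Unset Printing Implicit Defensive.
Import Order.TTheory GRing.Theory Num.Theory.
Local Open Scope ring_scope.

Section Defs.
Variables (R : realType) (S A : finType) (a0 : A).

Definition qof (Pm : S -> A -> S -> R) (r : S -> A -> R) (g : R)
    (V : S -> R) (s : S) (a : A) : R :=
  r s a + g * \sum_(s' : S) Pm s a s' * V s'.

(* V(s) = max_a Q(s,a)  (a0 only supplies the start value of the finite max) *)
Definition bellmanV (Pm : S -> A -> S -> R) (r : S -> A -> R) (g : R)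
    (V : S -> R) : S -> R :=
  fun s => \big[Num.max/qof Pm r g V s a0]_(a : A) qof Pm r g V s a.

(* value function after n backward steps starting from 0:
   with horizon H, V_h = Viter (H - h) (so V_H = 0) *)
Definition Viter (Pm : S -> A -> S -> R) (r : S -> A -> R) (g : R)
    (n : nat) : S -> R :=
  iter n (bellmanV Pm r g) (fun _ => 0).

Definition Qh (Pm : S -> A -> S -> R) (r : S -> A -> R) (g : R)
    (H h : nat) : S -> A -> R :=
  qof Pm r g (Viter Pm r g (H - h.+1)).

Definition supnorm (I : finType) (x : I -> R) : R :=
  \big[Num.max/0]_(i : I) `|x i|.

End Defs.

Definition empirical (R : realType) (S : finType) (N : nat)
    (samp : 'I_N -> S) (s' : S) : R :=
  (#|[set i : 'I_N | samp i == s']|)%:R / N%:R.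

From mathcomp Require Import all_boot all_order all_algebra.
From mathcomp Require Import reals ring lra.
Set Implicit Arguments. Unset Strict Implicit. Unset Printing Implicit Defensive.
Import Order.TTheory GRing.Theory Num.Theory.
Local Open Scope ring_scope.

(* Write Q, V for the true and Q^, V^ for the empirical iterates.  Then
   Q^_h - Q_h = gamma ((P^ - P) V^_{h+1} + P (V^_{h+1} - V_{h+1})).
   Linearity of phi makes every row of P the same lambda-combination of the
   anchor rows P_K that defines the corresponding row of P^ from P^_K, so the
   first term is at most L |(P^_K - P_K) V^_{h+1}|.  The second is at most
   |Q^_{h+1} - Q_{h+1}|, because P is stochastic and max is 1-Lipschitz.
   Unrolling from the horizon, where both value functions vanish, gives the
   bound. *)

Lemma le_supnorm (R : realType) (I : finType) (x : I -> R) (i : I) :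
  `|x i| <= supnorm x.
Proof. exact: le_bigmax. Qed.

Lemma supnorm_ge0 (R : realType) (I : finType) (x : I -> R) : 0 <= supnorm x.
Proof. exact: bigmax_ge_id. Qed.

Lemma supnorm_le (R : realType) (I : finType) (x : I -> R) (c : R) :
  0 <= c -> (forall i, `|x i| <= c) -> supnorm x <= c.
Proof. by move=> c_ge0 x_le; apply: bigmax_le. Qed.

Lemma norm_maxB_le (R : realDomainType) (x1 x2 y1 y2 c : R) :
  `|x1 - y1| <= c -> `|x2 - y2| <= c -> `|Num.max x1 x2 - Num.max y1 y2| <= c.
Proof.
rewrite !ler_norml => /andP[? ?] /andP[? ?].
by case: (leP x1 x2); case: (leP y1 y2) => *; apply/andP; split; lra.
Qed.

Lemma bellmanV_dist_le (R : realType) (S A : finType) (a0 : A)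
    (P1 P2 : S -> A -> S -> R) (r : S -> A -> R) (g : R) (V1 V2 : S -> R)
    (s : S) (c : R) :
  (forall a, `|qof P1 r g V1 s a - qof P2 r g V2 s a| <= c) ->
  `|bellmanV a0 P1 r g V1 s - bellmanV a0 P2 r g V2 s| <= c.
Proof.
move=> qof_le; apply: (big_ind2 (fun x y => `|x - y| <= c)) => //.
by move=> *; apply: norm_maxB_le.
Qed.

Lemma norm_convex_comb_le (R : realDomainType) (I : finType) (p V : I -> R) (c : R) :
  (forall i, 0 <= p i) -> \sum_i p i = 1 -> (forall i, `|V i| <= c) ->
  `|\sum_i p i * V i| <= c.
Proof.
move=> p_ge0 p_sum1 V_le; apply: le_trans (ler_norm_sum _ _ _) _.
rewrite -[c]mul1r -p_sum1 big_distrl /=; apply: ler_sum => i _.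
by rewrite normrM ger0_norm // ler_wpM2l.
Qed.

Lemma norm_lincomb_diff_le (R : realType) (K S : finType) (lam : K -> R)
    (p q : K -> S -> R) (V : S -> R) :
  `|\sum_s (\sum_k lam k * q k s - \sum_k lam k * p k s) * V s|
    <= (\sum_k `|lam k|) * supnorm (fun k => \sum_s (q k s - p k s) * V s).
Proof.
have -> : \sum_s (\sum_k lam k * q k s - \sum_k lam k * p k s) * V s
        = \sum_k lam k * \sum_s (q k s - p k s) * V s.
  under eq_bigr => s _ do rewrite -sumrB big_distrl /=.
  rewrite exchange_big; apply: eq_bigr => k _.
  by rewrite big_distrr; apply: eq_bigr => s _ /=; rewrite -mulrBr mulrA.
apply: le_trans (ler_norm_sum _ _ _) _; rewrite big_distrl /=.
by apply: ler_sum => k _; rewrite normrM ler_wpM2l ?le_supnorm.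
Qed.

Lemma kernel_anchor_lincomb (R : pzSemiRingType) (S A K : finType) (d : nat)
    (P : S -> A -> S -> R) (phi : S -> A -> 'I_d -> R) (psi : 'I_d -> S -> R)
    (sk : K -> S) (ak : K -> A) (lambda : S -> A -> K -> R) :
  (forall s a s', P s a s' = \sum_(i < d) phi s a i * psi i s') ->
  (forall s a i, phi s a i = \sum_k lambda s a k * phi (sk k) (ak k) i) ->
  forall s a s', P s a s' = \sum_k lambda s a k * P (sk k) (ak k) s'.
Proof.
move=> P_factor phi_anchor s a s'; rewrite P_factor.
under eq_bigr => i _ do rewrite phi_anchor big_distrl /=.
rewrite exchange_big; apply: eq_bigr => k _.
by rewrite P_factor big_distrr; apply: eq_bigr => i _ /=; rewrite mulrA.
Qed.

Section SimulationError.
Variables (R : realType) (S A : finType) (a0 : A).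
Variables (P Phat : S -> A -> S -> R) (r : S -> A -> R) (gamma : R).
Variable eps : nat -> R.
Hypothesis gamma_ge0 : 0 <= gamma.
Hypothesis P_ge0 : forall s a s', 0 <= P s a s'.
Hypothesis P_sum1 : forall s a, \sum_s' P s a s' = 1.
Hypothesis model_err : forall m s a,
  `|\sum_s' (Phat s a s' - P s a s') * Viter a0 Phat r gamma m s'| <= eps m.

Lemma qof_dist_le (V1 V2 : S -> R) (c : R) (s : S) (a : A) :
  (forall s', `|V1 s' - V2 s'| <= c) ->
  `|qof Phat r gamma V1 s a - qof P r gamma V2 s a|
    <= gamma * (`|\sum_s' (Phat s a s' - P s a s') * V1 s'| + c).
Proof.
move=> V_le; rewrite /qof.
have split_diff : \sum_s' Phat s a s' * V1 s' - \sum_s' P s a s' * V2 s'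
    = \sum_s' (Phat s a s' - P s a s') * V1 s'
      + \sum_s' P s a s' * (V1 s' - V2 s').
  by rewrite -big_split -sumrB /=; apply: eq_bigr => s' _; ring.
have -> : forall X Y : R, r s a + gamma * X - (r s a + gamma * Y) = gamma * (X - Y).
  by move=> X Y; ring.
rewrite split_diff normrM ger0_norm // ler_wpM2l // (le_trans (ler_normD _ _)) // lerD2l.
exact: norm_convex_comb_le.
Qed.

Lemma qof_Viter_dist_le (m : nat) (s : S) (a : A) :
  `|qof Phat r gamma (Viter a0 Phat r gamma m) s a
    - qof P r gamma (Viter a0 P r gamma m) s a|
    <= \sum_(j < m.+1) gamma ^+ j.+1 * eps (m - j)%N.
Proof.
elim: m s a => [|m IH] s a.
  rewrite big_ord1 expr1 subn0 -[eps 0]addr0.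
  have V_dist_le s' : `|Viter a0 Phat r gamma 0 s' - Viter a0 P r gamma 0 s'| <= 0.
    by rewrite subrr normr0.
  apply: le_trans (qof_dist_le s a V_dist_le) _.
  by rewrite ler_wpM2l // lerD2r model_err.
have -> : \sum_(j < m.+2) gamma ^+ j.+1 * eps (m.+1 - j)%N
    = gamma * (eps m.+1 + \sum_(j < m.+1) gamma ^+ j.+1 * eps (m - j)%N).
  rewrite big_ord_recl mulrDr big_distrr; congr (_ + _).
  by apply: eq_bigr => j _; rewrite lift0 subSS exprS -mulrA.
have V_dist_le s' : `|Viter a0 Phat r gamma m.+1 s' - Viter a0 P r gamma m.+1 s'|
    <= \sum_(j < m.+1) gamma ^+ j.+1 * eps (m - j)%N.
  by apply: bellmanV_dist_le => a'; apply: IH.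
apply: le_trans (qof_dist_le s a V_dist_le) _.
by rewrite ler_wpM2l // lerD2r model_err.
Qed.

End SimulationError.
Theorem lemma30 (R : realType) (S A : finType) (a0 : A)
  (P : S -> A -> S -> R) (r : S -> A -> R) (gamma : R)
  (d : nat) (phi : S -> A -> 'I_d -> R) (psi : 'I_d -> S -> R)
  (K : finType) (sk : K -> S) (ak : K -> A)
  (lambda : S -> A -> K -> R) (L : R) (N : nat)
  (samples : K -> 'I_N -> S) (H : nat) :
  (forall s a s', 0 <= P s a s') ->
  (forall s a, \sum_(s' : S) P s a s' = 1) ->
  (forall s a, 0 <= r s a <= 1) ->
  0 < gamma < 1 ->
  (forall s a s', P s a s' = \sum_(k < d) phi s a k * psi k s') ->
  injective (fun k : K => (sk k, ak k)) ->
  1 <= L ->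
  (forall s a, forall i : 'I_d,
      phi s a i = \sum_(k : K) lambda s a k * phi (sk k) (ak k) i) ->
  (forall s a, \sum_(k : K) `|lambda s a k| <= L) ->
  (0 < N)%N ->
  (1 <= H)%N ->
  let PhatK : K -> S -> R := fun k s' => empirical R (samples k) s' in
  let Phat : S -> A -> S -> R :=
    fun s a s' => \sum_(k : K) lambda s a k * PhatK k s' in
  let Vhat : nat -> S -> R := fun h => Viter a0 Phat r gamma (H - h) in
  supnorm (fun sa : S * A =>
      Qh a0 Phat r gamma H 0 sa.1 sa.2 - Qh a0 P r gamma H 0 sa.1 sa.2)
  <= \sum_(h < H) gamma ^+ h.+1 * L *
       supnorm (fun k : K =>
         \sum_(s' : S) (PhatK k s' - P (sk k) (ak k) s') * Vhat h.+1 s').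
Proof.
move=> P_ge0 P_sum1 _ /andP[/ltW gamma_ge0 _] P_factor _ L_ge1 phi_anchor
  lambda_le _ H_ge1; cbv zeta.
pose PhatK k s' : R := empirical R (samples k) s'.
pose Phat s a s' := \sum_k lambda s a k * PhatK k s'.
have P_anchor := kernel_anchor_lincomb P_factor phi_anchor.
pose err m := supnorm (fun k => \sum_s' (PhatK k s' - P (sk k) (ak k) s')
                                        * Viter a0 Phat r gamma m s').
have model_err m s a :
    `|\sum_s' (Phat s a s' - P s a s') * Viter a0 Phat r gamma m s'| <= L * err m.
  under eq_bigr => s' _ do rewrite [P s a s']P_anchor.
  apply: le_trans (norm_lincomb_diff_le _ _ _ _) _.
  by rewrite ler_wpM2r ?supnorm_ge0.
case: H H_ge1 => // m _.
apply: supnorm_le => [|[s a]].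
  apply: sumr_ge0 => h _.
  by rewrite mulr_ge0 ?supnorm_ge0 // mulr_ge0 ?exprn_ge0 // (le_trans ler01).
rewrite /Qh subn1 /=.
apply: le_trans (qof_Viter_dist_le gamma_ge0 P_ge0 P_sum1 model_err m s a) _.
by apply: ler_sum => h _; rewrite mulrA lexx.
Qed.
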